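(* Let $P$ be a path with red edge costs in $\{a,b\}$, $0\le a<b$, and let $\sigma$ be the number of bad $a$-blocks of $P$. Let $r^*$ be the optimal revenue of $\mathsf{StackMST}(0,0)$ with red tree $P$. Then $$r^*\le c(P)-\min\left\{\sigma a,\ \left\lfloor\frac{\sigma}{2}\right\rfloor(b-a)+\left(\sigma-2\left\lfloor\frac{\sigma}{2}\right\rfloor\right)\min\{a,b-a\}\right\}.$$
   Context: Budgeted Stackelberg MST game $\mathsf{StackMST}(\gamma,\Delta)$: we are given a tree $T=(V,E(T))$ whose (red) edges have fixed costs $c(e)\ge 0$, a non-negative activation cost $\gamma(e)$ for every pair $e\notin E(T)$ of vertices, and a budget $\Delta$. The leader selects a set $F$ of pairs not in $E(T)$ with $\sum_{e\in F}\gamma(e)\le\Delta$ and prices $p:F\to\mathbb{R}^+$; the follower computes a minimum spanning tree $M$ of $(V,E(T)\cup F)$ (weights $c$ on red edges, $p$ on $F$), breaking ties in favor of the leader's revenue $\sum_{e\in F\cap M}p(e)$, which the leader maximizes. $\mathsf{StackMST}(0,0)$ is the case $\gamma\equiv0,\Delta=0$ (any new edges may be added freely). For the red path $P$: $c(P)$ is the total cost of its edges; an $a$-block is an inclusion-maximal subpath of $P$ all of whose edges have cost $a$; an $a$-block is good if it has at least 3 edges and bad otherwise. *)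

From HB Require Import structures.
From mathcomp Require Import all_boot all_order all_algebra.
Set Implicit Arguments. Unset Strict Implicit. Unset Printing Implicit Defensive.
Import Order.TTheory GRing.Theory Num.Theory.
Local Open Scope ring_scope.

(* Red path P on vertices 'I_n.+1 = {0,..,n}; red edge k (k < n) joins
   vertices k and k+1 and has cost c k.  An (undirected) edge {x,y} is
   represented by the ordered pair (x,y) with x < y. *)
Definition vpair (n : nat) := ('I_n.+1 * 'I_n.+1)%type.

Definition is_red (n : nat) (e : vpair n) : bool := (e.2 == (e.1).+1 :> nat).

Definition is_pair (n : nat) (e : vpair n) : bool := (e.1 < e.2)%N.

Definition red_edges (n : nat) : {set vpair n} := [set e | is_red e].

Definition leader_edges (n : nat) (F : {set vpair n}) : Prop :=
  forall e, e \in F -> is_pair e && ~~ is_red e.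

Definition weight (R : numDomainType) (n : nat) (c : nat -> R)
  (p : vpair n -> R) (e : vpair n) : R :=
  if is_red e then c (e.1 : nat) else p e.

Definition adj (n : nat) (M : {set vpair n}) : rel 'I_n.+1 :=
  fun x y => ((x, y) \in M) || ((y, x) \in M).

Definition spanning_tree (n : nat) (G M : {set vpair n}) : Prop :=
  [/\ M \subset G, #|M| = n & forall x y : 'I_n.+1, connect (adj M) x y].

Definition tree_weight (R : numDomainType) (n : nat) (c : nat -> R)
  (p : vpair n -> R) (M : {set vpair n}) : R :=
  \sum_(e in M) weight c p e.

Definition is_MST (R : numDomainType) (n : nat) (c : nat -> R)
  (F : {set vpair n}) (p : vpair n -> R) (M : {set vpair n}) : Prop :=
  spanning_tree (red_edges n :|: F) M /\
  forall M', spanning_tree (red_edges n :|: F) M' ->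
    tree_weight c p M <= tree_weight c p M'.

Definition revenue (R : numDomainType) (n : nat) (F : {set vpair n})
  (p : vpair n -> R) (M : {set vpair n}) : R :=
  \sum_(e in M :&: F) p e.

Definition path_cost (R : numDomainType) (n : nat) (c : nat -> R) : R :=
  \sum_(k < n) c k.

(* (i, l) is an a-block: edges i, ..., i+l-1 (l >= 1) all have cost a, and
   the subpath is inclusion-maximal. *)
Definition is_a_block (R : numDomainType) (n : nat) (c : nat -> R) (a : R)
  (il : 'I_n.+1 * 'I_n.+1) : bool :=
  let i := (il.1 : nat) in let l := (il.2 : nat) in
  [&& (0 < l)%N, (i + l <= n)%N,
      [forall k : 'I_n.+1, ((i <= k)%N && (k < i + l)%N) ==> (c k == a)],
      (i == 0%N) || (c i.-1 != a) &
      (i + l == n) || (c (i + l)%N != a)].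

Definition bad_a_blocks (R : numDomainType) (n : nat) (c : nat -> R) (a : R)
  : nat :=
  #|[set il : 'I_n.+1 * 'I_n.+1 | is_a_block c a il && ((il.2 : nat) < 3)%N]|.
Arguments path_cost R n c : clear implicits.
Arguments bad_a_blocks R n c a : clear implicits.
Arguments path_cost {R} n c.
Arguments bad_a_blocks {R} n c a.

From HB Require Import structures.
From mathcomp Require Import all_boot all_order all_algebra.
From mathcomp Require Import ring lra zify.
Import Order.TTheory GRing.Theory Num.Theory.

Set Implicit Arguments.
Unset Strict Implicit.
Unset Printing Implicit Defensive.

(* Let X be the set of edges of weight at most a in the follower's tree M.
   By the cycle property X joins the ends of every red a-edge, and every edge
   of M weighs at most b.  Red edges of M earn nothing, a leader edge of M
   earns at most a, plus (b - a) if it lies outside X, and at most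
   (#components of X) - 1 edges of M lie outside X.  Write
   d = (#b-edges + 1) - #components of X.  A bad a-block either contains a
   red edge of M, or the X-path joining the ends of its first edge leaves the
   block (it has at most two edges), so that its first vertex, which starts an
   a-run, shares its X-component with the start of another a-run.  The path
   has at most #b-edges + 1 run starts, so at most 2d blocks are of the second
   kind, and c(P) - revenue >= a s1 + (b - a) d, where s1 counts the blocks of
   the first kind. *)

Lemma connect_last_step (T : finType) (e : rel T) x y :
  connect e x y -> x != y -> exists2 z, connect e x z & e z y.
Proof.
move=> /connectP[q pq ->]; case/lastP: q pq => [|q z] /=; first by rewrite eqxx.
rewrite rcons_path last_rcons => /andP[pq hz] _.
by exists (last x q) => //; apply/connectP; exists q.
Qed.

Lemma card_fibers_ge2 (T U : finType) (f : T -> U) (A W : {set T}) :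
  W \subset A ->
  (forall w, w \in W -> exists2 w', w' \in A & (w' != w) && (f w' == f w)) ->
  #|W| + 2 * #|f @: A| <= 2 * #|A|.
Proof.
move=> sWA hW; pose fiber u := [set i | (i \in A) && (f i == u)].
have fiberW u : u \in f @: A ->
    \sum_(i in A | f i == u) (i \in W) + 2 <= 2 * #|fiber u|.
  move=> /imsetP[x xA ->].
  have [Wu | noWu] := boolP [exists i in fiber (f x), i \in W].
    have /exists_inP[w] := Wu; rewrite inE => /andP[wA /eqP fw] wW.
    have [w' w'A /andP[w'w /eqP fw']] := hW w wW.
    have : #|[set w; w']| <= #|fiber (f x)|.
      by apply/subset_leq_card/subsetP => y /set2P[] ->; rewrite inE ?w'A ?wA ?fw' ?fw eqxx.
    rewrite cards2 eq_sym w'w -sum1dep_card mul2n -addnn => h2.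
    by apply: leq_add h2; apply: leq_sum => i _; apply: leq_b1.
  rewrite big1 => [|i /andP[iA fi]]; last first.
    apply/eqP; rewrite eqb0; apply: contra noWu => iW.
    by apply/exists_inP; exists i; rewrite ?inE ?iA.
  rewrite add0n -{1}(muln1 2) leq_pmul2l // card_gt0.
  by apply/set0Pn; exists x; rewrite inE xA eqxx.
have -> : #|W| = \sum_(i in A) (i \in W).
  rewrite (big_setID W) /= (setIidPr sWA) [X in _ + X]big1 ?addn0 => [|i]; last first.
    by rewrite inE => /andP[/negbTE -> _].
  by rewrite -sum1_card; apply: eq_bigr => i ->.
rewrite -[#|A|]sum1_card -[#|f @: A|]sum1_card !(partition_big_imset f A) /=.
rewrite !big_distrr -big_split /=; apply: leq_sum => u hu.
by rewrite muln1 sum1dep_card fiberW.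
Qed.

Section Connectivity.

Variable n : nat.
Implicit Types (E : {set vpair n}) (e g : vpair n) (x y z u v w : 'I_n.+1).

Lemma adj_sym E : symmetric (adj E).
Proof. by move=> x y; rewrite /adj orbC. Qed.

Lemma connect_adjC E : connect_sym (adj E).
Proof. exact/sym_connect_sym/adj_sym. Qed.

Lemma connect_adjS E E' :
  E \subset E' -> subrel (connect (adj E)) (connect (adj E')).
Proof.
move=> /subsetP sEE'; apply: connect_sub => x y /orP hxy; apply: connect1.
by apply/orP; case: hxy => h; [left | right]; apply: sEE'.
Qed.

Lemma adj_setD1 E g x y : adj E x y ->
  adj (E :\ g) x y \/ (x = g.1 /\ y = g.2 \/ x = g.2 /\ y = g.1).
Proof.
case/orP => hxy.
  have [<-|ne] := eqVneq (x, y) g; first by right; left.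
  by left; rewrite /adj !inE ne hxy.
have [<-|ne] := eqVneq (y, x) g; first by right; right.
by left; rewrite /adj !inE ne hxy orbT.
Qed.

Lemma connect_setD1 E g u w : connect (adj E) u w ->
  connect (adj (E :\ g)) u w \/
  ((connect (adj (E :\ g)) u g.1 || connect (adj (E :\ g)) u g.2) &&
   (connect (adj (E :\ g)) g.1 w || connect (adj (E :\ g)) g.2 w)).
Proof.
set E' := E :\ g; move=> /connectP[q pq ->].
elim: q u pq => [|v q IH] u /=; first by left; rewrite connect0.
move=> /andP[/(adj_setD1 g) huv /IH hv]; case: huv => [huv | hg].
  case: hv => [hv | /andP[h1 h2]]; first by left; exact: connect_trans (connect1 huv) hv.
  by right; rewrite h2 andbT; case/orP: h1 => h1;
     rewrite (connect_trans (connect1 huv) h1) ?orbT.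
right; case: hv => [hv | /andP[_ h2]].
  by case: hg => -[? ?]; subst u v; rewrite connect0 hv ?orbT.
by rewrite h2 andbT; case: hg => -[-> _]; rewrite connect0 ?orbT.
Qed.

Lemma connect_setD1_from_ends E g :
  (forall x y, connect (adj E) x y) ->
  forall z, connect (adj (E :\ g)) g.1 z || connect (adj (E :\ g)) g.2 z.
Proof.
move=> hconn z; by case: (connect_setD1 g (hconn g.1 z)) => [-> | /andP[]].
Qed.

Lemma connect_cross_edge E (S : pred 'I_n.+1) z w :
  connect (adj E) z w -> S w -> ~~ S z ->
  exists e u v, [/\ e \in E, e = (u, v) \/ e = (v, u), ~~ S u, S v &
                 connect (adj (E :\ e)) z u].
Proof.
move=> /connectP[q pq ->]; elim: q z pq => [|v q IH] z /=; first by move=> _ ->.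
move=> /andP[hzv pq] hl hz.
have [hv | hv] := boolP (S v).
  by case/orP: hzv => h; [exists (z, v) | exists (v, z)]; exists z, v;
     split; rewrite ?connect0 //; [left | right].
have [e [u [v' [eE ee hu hv' hc]]]] := IH v pq hl hv.
exists e, u, v'; split => //; apply: connect_trans hc; apply: connect1.
have [// | [[ez ev] | [ez ev]]] := adj_setD1 e hzv;
  by move: hz hv; rewrite ez ev; case: ee => -> /=; rewrite hv'.
Qed.

End Connectivity.

Section Components.

Variable n : nat.
Implicit Types (E : {set vpair n}) (x y : 'I_n.+1).

Definition vclass E x : {set 'I_n.+1} := [set y | connect (adj E) x y].

Definition ncomp E : nat := #|[set vclass E x | x : 'I_n.+1]|.

Lemma vclass_eq E x y : (vclass E x == vclass E y) = connect (adj E) x y.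
Proof.
apply/eqP/idP => [hxy | hxy].
  have : y \in vclass E y by rewrite inE connect0.
  by rewrite -hxy inE.
apply/setP=> z; rewrite !inE; apply/idP/idP => hz; last exact: connect_trans hxy hz.
by apply: connect_trans hz; rewrite connect_adjC.
Qed.

Lemma vclassP E x y : reflect (vclass E x = vclass E y) (connect (adj E) x y).
Proof. by rewrite -vclass_eq; apply: eqP. Qed.

Lemma ncomp_set0 : ncomp set0 = n.+1.
Proof.
have adj0 x y : connect (adj set0) x y -> x = y.
  by move=> /connectP[[|z q] /= pq ->] //; case/andP: pq; rewrite /adj !inE.
rewrite /ncomp (eq_imset (g := set1)) => [|x].
  by rewrite card_imset ?cardsT ?card_ord //; apply: set1_inj.
by apply/setP => y; rewrite !inE; apply/idP/eqP => [/adj0 | ->].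
Qed.

(* Removing an edge splits at most one class: the closure map from the
   classes of [E :\ g] to those of [E] is injective away from the class of [g.1]. *)
Lemma ncomp_setD1 E g : ncomp (E :\ g) <= (ncomp E).+1.
Proof.
rewrite /ncomp; set E' := E :\ g; set A := [set vclass E' x | x : 'I_n.+1].
pose close (S : {set 'I_n.+1}) := [set z | [exists u in S, connect (adj E) u z]].
have close_vclass x : close (vclass E' x) = vclass E x.
  apply/setP=> z; rewrite !inE; apply/existsP/idP => [[u /andP[]] | hz].
    by rewrite inE => /(connect_adjS (subsetDl E _)); apply: connect_trans.
  by exists x; rewrite inE connect0.
have -> : [set vclass E x | x : 'I_n.+1] = close @: A.
  by rewrite -imset_comp; apply: eq_imset => x; rewrite /= close_vclass.
have inj : {in A :\ vclass E' g.1 &, injective close}.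
  move=> S1 S2 /setD1P[nu /imsetP[u _ eu]] /setD1P[nw /imsetP[w _ ew]].
  subst S1 S2.
  rewrite !close_vclass => /vclassP /(connect_setD1 g) [/vclassP // | /andP[hu hw]].
  have nu1 : ~~ connect (adj E') u g.1 by apply: contra nu => /vclassP ->.
  have nw1 : ~~ connect (adj E') g.1 w.
    by rewrite connect_adjC; apply: contra nw => /vclassP ->.
  rewrite (negbTE nu1) (negbTE nw1) /= in hu hw.
  exact/vclassP/(connect_trans hu hw).
rewrite (cardsD1 (vclass E' g.1) A) -(card_in_imset inj).
have : #|close @: (A :\ vclass E' g.1)| <= #|close @: A|.
  exact/subset_leq_card/imsetS/subsetDl.
by case: (_ \in A); rewrite ?add1n ?add0n ?ltnS // => /leqW.
Qed.

Lemma ncomp_card E : n.+1 <= ncomp E + #|E|.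
Proof.
elim: {E}#|E| {-2}E (erefl #|E|) => [|k IH] E hE.
  by rewrite (cards0_eq hE) ncomp_set0 cards0 addn0.
have /set0Pn[g gE] : E != set0 by rewrite -card_gt0 hE.
have hE' : #|E :\ g| = k by move: hE; rewrite (cardsD1 g) gE add1n => -[].
apply: leq_trans (IH _ hE') _.
by rewrite hE' hE addnS -addSn leq_add2r ncomp_setD1.
Qed.

Lemma ncomp_connected E : (forall x y, connect (adj E) x y) -> ncomp E <= 1.
Proof.
move=> hE; rewrite /ncomp -(cards1 (vclass E ord0)); apply: subset_leq_card.
by apply/subsetP => _ /imsetP[x _ ->]; rewrite inE; apply/eqP/vclassP.
Qed.

End Components.
Section Exchange.

Variable n : nat.
Implicit Types (G M : {set vpair n}) (e g : vpair n).

Lemma spanning_tree_exchange G M e g u v :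
  spanning_tree G M -> g \in G -> g \notin M -> e \in M ->
  e = (u, v) \/ e = (v, u) ->
  connect (adj (M :\ e)) g.2 u -> connect (adj (M :\ e)) g.1 v ->
  spanning_tree G (g |: (M :\ e)).
Proof.
move=> [sMG cM hconn] gG gM eM ee hu hv; set M' := g |: (M :\ e).
have sM' : M :\ e \subset M' by apply: subsetUr.
have hg : connect (adj M') g.2 g.1.
  by rewrite connect_adjC; apply: connect1; rewrite /adj -surjective_pairing setU11.
have he : connect (adj M') e.1 e.2.
  have hu' : connect (adj M') u g.2 by rewrite connect_adjC (connect_adjS sM').
  have huv := connect_trans (connect_trans hu' hg) (connect_adjS sM' hv).
  by case: ee => ->; rewrite // connect_adjC.
have from_e1 z : connect (adj M') e.1 z.
  case/orP: (connect_setD1_from_ends e hconn z) => /(connect_adjS sM') // h.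
  exact: connect_trans he h.
split=> [||x y].
- apply/subsetP => x /setU1P[-> // | /setD1P[_ /(subsetP sMG)] //].
- have gMe : g \notin M :\ e by rewrite inE negb_and gM orbT.
  by have := cardsD1 e M; rewrite eM cM => cMe; rewrite cardsU1 gMe -cMe.
- by apply: connect_trans (from_e1 y); rewrite connect_adjC.
Qed.

End Exchange.

Section RedPath.

Variable n : nat.
Implicit Types (E M : {set vpair n}) (e : vpair n) (x y u v : 'I_n.+1).

Definition red_edge k : vpair n := (inord k, inord k.+1).

Lemma red_edge_red k : k < n -> red_edge k \in red_edges n.
Proof. by move=> kn; rewrite inE /is_red /red_edge /= !inordK // ltnS ltnW. Qed.

Lemma red_edgeE e : is_red e -> e = red_edge e.1.
Proof.
case: e => x y /eqP /= hy; rewrite /red_edge.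
by congr pair; apply: val_inj; rewrite /= ?inord_val // inordK -hy.
Qed.

Lemma red_edge_mem M x y : (x, y) \in M -> y = x.+1 :> nat -> red_edge x \in M.
Proof. by move=> xyM hy; rewrite -(red_edgeE (e := (x, y))) // /is_red hy. Qed.

Lemma connect_consecutive E :
  (forall k, k < n -> connect (adj E) (inord k) (inord k.+1)) ->
  forall x y, connect (adj E) x y.
Proof.
move=> hE.
have from0 k : k <= n -> connect (adj E) ord0 (inord k).
  elim: k => [|k IH] hk; first by apply: eq_connect0; apply: val_inj; rewrite /= inordK.
  exact: connect_trans (IH (ltnW hk)) (hE k hk).
move=> x y; have := from0 y (leq_ord y); have := from0 x (leq_ord x).
rewrite !inord_val connect_adjC; exact: connect_trans.
Qed.

End RedPath.

Section Runs.

Variables (T : eqType) (c : nat -> T) (a : T).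

Definition is_run_start (v : nat) : bool := (v == 0) || (c v.-1 != a).

Definition run_starts n : {set 'I_n.+1} := [set v : 'I_n.+1 | is_run_start v].

(* The first vertex of the maximal run of [a]-edges of the path ending at vertex [k]. *)
Fixpoint run_start (k : nat) : nat :=
  if k is k'.+1 then (if c k' == a then run_start k' else k) else 0.

Lemma run_start_leq k : run_start k <= k.
Proof. by elim: k => //= k IH; case: ifP => // _; apply: leqW. Qed.

Lemma run_startP k : is_run_start (run_start k).
Proof. by elim: k => //= k IH; case: ifP => //; rewrite /is_run_start /= => ->. Qed.

Lemma run_start_gt k v : k < v -> c k != a -> k < run_start v.
Proof.
elim: v => // v IH; rewrite ltnS leq_eqVlt => /orP[/eqP -> /= /negbTE -> // | kv ck] /=.
by case: ifP => // _; [apply: IH | apply: ltnW].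
Qed.

Lemma connect_run_start n (E : {set vpair n}) v :
  (forall k, k < n -> c k = a -> connect (adj E) (inord k) (inord k.+1)) ->
  v <= n -> connect (adj E) (inord (run_start v)) (inord v).
Proof.
move=> hE; elim: v => [|v IH] hv //=; case: ifP => [/eqP cv | _] //.
exact: connect_trans (IH (ltnW hv)) (hE v hv cv).
Qed.

Lemma card_run_starts n : #|run_starts n| <= #|[set k : 'I_n | c k != a]|.+1.
Proof.
set B := [set k : 'I_n | c k != a].
pose succ (k : 'I_n) : 'I_n.+1 := inord k.+1.
have sub : run_starts n \subset ord0 |: succ @: B.
  apply/subsetP => v; rewrite inE => /orP[/eqP v0 | cv]; apply/setU1P.
    by left; apply: val_inj.
  have [v0 | v0] := eqVneq (v : nat) 0; first by left; apply: val_inj.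
  have hv : (v : nat).-1 < n by have := ltn_ord v; rewrite -ltnS prednK ?lt0n.
  right; apply/imsetP; exists (Ordinal hv); first by rewrite inE.
  by rewrite /succ /= prednK ?lt0n // inord_val.
apply: leq_trans (subset_leq_card sub) _; rewrite cardsU1.
exact: leq_add (leq_b1 _) (leq_imset_card _ _).
Qed.

Lemma ncomp_run_starts n (E : {set vpair n}) :
  (forall k, k < n -> c k = a -> connect (adj E) (inord k) (inord k.+1)) ->
  ncomp E = #|vclass E @: run_starts n|.
Proof.
move=> hE; rewrite /ncomp; congr #|pred_of_set _|; apply/setP => S.
apply/imsetP/imsetP => -[v vS ->]; last by exists v.
have hs : run_start v < n.+1 by apply: leq_ltn_trans (run_start_leq v) _.
exists (inord (run_start v)); first by rewrite inE inordK // run_startP.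
apply/vclassP; rewrite connect_adjC.
by have := connect_run_start hE (leq_ord v); rewrite inord_val.
Qed.

End Runs.

Section Blocks.

Variables (R : numDomainType) (n : nat) (c : nat -> R) (a : R).
Implicit Types (il : 'I_n.+1 * 'I_n.+1) (M X : {set vpair n}).

Lemma a_blockP il : is_a_block c a il ->
  [/\ 0 < il.2, il.1 + il.2 <= n,
      forall k, il.1 <= k < il.1 + il.2 -> c k = a,
      is_run_start c a il.1 &
      (il.1 + il.2 == n) || (c (il.1 + il.2) != a)].
Proof.
case/and5P => l0 ln /forallP ca hs he; split => // k /andP[ik kl].
have kn : k < n.+1 by rewrite ltnS; apply: leq_trans ln; apply: ltnW.
by have := ca (inord k); rewrite inordK // ik kl => /eqP.
Qed.

Lemma a_block_covers il il' k :
  is_a_block c a il -> is_a_block c a il' ->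
  il.1 <= k < il.1 + il.2 -> il'.1 <= k < il'.1 + il'.2 ->
  il'.1 <= il.1 /\ il.1 + il.2 <= il'.1 + il'.2.
Proof.
move=> /a_blockP[_ ln ca _ _] /a_blockP[_ ln' _ hs' he'] /andP[ik kl] /andP[ik' kl'].
split; rewrite leqNgt; apply/negP => hlt.
  have : c (il'.1).-1 = a by apply: ca; lia.
  by move: hs' => /orP[/eqP h0 | /eqP //]; move: hlt; rewrite h0.
have : c (il'.1 + il'.2) = a by apply: ca; lia.
by move: he' => /orP[/eqP hn | /eqP //]; move: hlt ln; rewrite hn; lia.
Qed.

Lemma a_block_unique il il' k :
  is_a_block c a il -> is_a_block c a il' ->
  il.1 <= k < il.1 + il.2 -> il'.1 <= k < il'.1 + il'.2 -> il = il'.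
Proof.
move=> bl bl' kil kil'.
have [h1 h2] := a_block_covers bl bl' kil kil'.
have [h1' h2'] := a_block_covers bl' bl kil' kil.
case: il il' {bl bl' kil kil'} h1 h2 h1' h2' => [i l] [i' l'] /= *.
by congr pair; apply: ord_inj; lia.
Qed.

Definition block_meets M il : bool :=
  [exists k : 'I_n.+1, (il.1 <= k < il.1 + il.2) && (red_edge n k \in M)].

(* The red edge [il.1] of the block is spanned by [X]; the last step of that
   connection enters [il.1 + 1] from outside the block (from inside it would
   be a red edge of [M], as the block has at most two edges), and the start of
   the a-run through that outside vertex is the required [w]. *)
Lemma unmet_bad_block_class M X il :
  X \subset M -> (forall e, e \in M -> e.1 < e.2) ->
  (forall k, k < n -> c k = a -> connect (adj X) (inord k) (inord k.+1)) ->
  is_a_block c a il -> il.2 < 3 -> ~~ block_meets M il ->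
  exists2 w, w \in run_starts c a n & (w != il.1) && (vclass X w == vclass X il.1).
Proof.
case: il => i l /= XM Mlt Xa bl l3 nmeet.
have [l0 ln ca _ he] := a_blockP bl; rewrite /= in l0 ln ca he.
have unmet k : i <= k < i + l -> red_edge n k \notin M.
  move=> hk; apply: contra nmeet => kM; apply/existsP; exists (inord k).
  by rewrite inordK ?hk //=; lia.
have hi : connect (adj X) i (inord i.+1).
  have := Xa i _ (ca i _); rewrite inord_val; apply; lia.
set y : 'I_n.+1 := inord i.+1 in hi.
have yv : y = i.+1 :> nat by rewrite inordK // ltnS; lia.
have ny : i != y by apply/eqP => iy; move: yv; rewrite -iy; apply: n_Sn.
have [z hiz hzy] := connect_last_step hi ny.
have zout : z < i \/ i + l < z.
  case/orP: hzy => /(subsetP XM) zyM; have := Mlt _ zyM; rewrite /= => lt.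
    left; have [ez | nz] := eqVneq (z : nat) i; last by lia.
    by move: (unmet z); rewrite (red_edge_mem zyM) ?yv ?ez //; lia.
  have [hz | hz] := ltnP (i + l) z; first by right.
  by move: (unmet y); rewrite (red_edge_mem zyM) //; lia.
have zn : z <= n by rewrite -ltnS.
have sz := run_start_leq c a z.
have szn : run_start c a z < n.+1 by lia.
exists (inord (run_start c a z)); first by rewrite inE inordK // run_startP.
apply/andP; split.
  apply/negP => /eqP /(congr1 val); rewrite /= inordK // => e.
  case: zout => hz; first by lia.
  have cil : c (i + l) != a by move: he => /orP[/eqP | //]; lia.
  by have := run_start_gt hz cil; lia.
rewrite vclass_eq; apply: connect_trans (connect_run_start Xa zn) _.
by rewrite inord_val connect_adjC.
Qed.

End Blocks.

Local Open Scope ring_scope.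

Lemma weight_red_edge (R : numDomainType) n (c : nat -> R) (p : vpair n -> R) k :
  (k < n)%N -> weight c p (red_edge n k) = c k.
Proof.
move=> kn; have := red_edge_red kn; rewrite inE /weight => ->.
by rewrite /= inordK // ltnS ltnW.
Qed.

Definition light_edges (R : numDomainType) n (c : nat -> R) (p : vpair n -> R)
  (M : {set vpair n}) (t : R) : {set vpair n} :=
  [set e in M | weight c p e <= t].

Lemma light_edges_sub (R : numDomainType) n (c : nat -> R) (p : vpair n -> R)
  (M : {set vpair n}) (t : R) : light_edges c p M t \subset M.
Proof. by apply/subsetP => e; rewrite inE => /andP[]. Qed.

Section MinimumSpanningTree.

Variables (R : realFieldType) (n : nat) (c : nat -> R).
Variables (F : {set vpair n}) (p : vpair n -> R) (M : {set vpair n}).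
Hypothesis hM : is_MST c F p M.

(* The cycle property of minimum spanning trees. *)
Lemma light_edges_connect t g :
  g \in red_edges n :|: F -> weight c p g <= t ->
  connect (adj (light_edges c p M t)) g.1 g.2.
Proof.
move=> gG gt; have [stM hmin] := hM; have [_ _ hconn] := stM.
set X := light_edges c p M t.
apply/negPn/negP => nc.
have [e [u [v [eM ee hu hv hcu]]]] :=
  connect_cross_edge (S := connect (adj X) g.1) (hconn g.2 g.1)
    (connect0 _ _) nc.
have te : t < weight c p e.
  rewrite ltNge; apply: contra hu => et; apply: connect_trans hv (connect1 _).
  by case: ee => ee; rewrite /adj -ee !inE eM et ?orbT.
have gM : g \notin M.
  apply: contra nc => gM; apply: connect1.
  by rewrite /adj -surjective_pairing inE gM gt.
have XMe : X \subset M :\ e.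
  apply/subsetP => x xX; rewrite !inE (subsetP (light_edges_sub _ _ _ _) _ xX) andbT.
  by apply: contraTneq xX => ->; rewrite inE negb_and -ltNge te orbT.
have stM' := spanning_tree_exchange stM gG gM eM ee hcu (connect_adjS XMe hv).
have := hmin _ stM'; rewrite /tree_weight (big_setD1 e eM).
rewrite big_setU1 ?inE ?negb_and ?gM ?orbT //=.
by rewrite lerD2r => /le_lt_trans/(_ (le_lt_trans gt te)); rewrite ltxx.
Qed.

Lemma light_edges_connect_red t k : (k < n)%N -> c k <= t ->
  connect (adj (light_edges c p M t)) (inord k) (inord k.+1).
Proof.
move=> kn ckt; apply: (light_edges_connect (g := red_edge n k)).
  by rewrite inE red_edge_red.
by rewrite weight_red_edge.
Qed.

Lemma light_edges_eq_tree t : (forall k, (k < n)%N -> c k <= t) ->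
  light_edges c p M t = M.
Proof.
move=> ct; set X := light_edges c p M t.
have cX : (ncomp X <= 1)%N.
  apply/ncomp_connected/connect_consecutive => k kn.
  exact: light_edges_connect_red kn (ct k kn).
have [[_ cM _] _] := hM.
apply/eqP; rewrite eqEcard light_edges_sub cM /=.
exact: leq_trans (ncomp_card X) (leq_add cX (leqnn #|X|)).
Qed.

End MinimumSpanningTree.

Lemma path_costE (R : numDomainType) n (c : nat -> R) (a b : R) :
  (forall k, (k < n)%N -> c k = a \/ c k = b) ->
  path_cost n c = a * n%:R + (b - a) * #|[set k : 'I_n | c k != a]|%:R.
Proof.
move=> hc; rewrite /path_cost.
have -> : \sum_(k < n) c k = \sum_(k < n) (a + (b - a) * (c k != a)%:R).
  apply: eq_bigr => k _; have [ck | ck] := eqVneq (c k) a; first by rewrite ck mulr0 addr0.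
  case: (hc k (ltn_ord k)) => ckb; first by rewrite ckb eqxx in ck.
  by rewrite ckb mulr1 addrC subrK.
rewrite big_split /= sumr_const card_ord -mulr_sumr -natr_sum !mulr_natr.
congr (_ + _ *+ _); rewrite -sum1_card [RHS]big_mkcond /=.
by apply: eq_bigr => k _; rewrite inE; case: (c k != a).
Qed.

Section Revenue.

Variables (R : realFieldType) (n : nat) (c : nat -> R) (a b : R).
Variables (F : {set vpair n}) (p : vpair n -> R) (M : {set vpair n}).
Hypotheses (ha : 0 <= a) (hab : a < b).
Hypothesis hc : forall k, (k < n)%N -> c k = a \/ c k = b.
Hypothesis hF : leader_edges F.
Hypothesis hM : is_MST c F p M.

Local Notation X := (light_edges c p M a).
Local Notation bad := [set il : 'I_n.+1 * 'I_n.+1 | is_a_block c a il && (il.2 < 3)%N].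
Local Notation met := [set il : 'I_n.+1 * 'I_n.+1 | block_meets M il].

Lemma tree_edge_ordered e : e \in M -> (e.1 < e.2)%N.
Proof.
have [[sM _ _] _] := hM; move=> /(subsetP sM) /setUP[| /hF /andP[] //].
by rewrite inE /is_red => /eqP ->.
Qed.

Lemma light_connect_a_edge k : (k < n)%N -> c k = a ->
  connect (adj X) (inord k) (inord k.+1).
Proof. by move=> kn ck; apply: (light_edges_connect_red hM kn); rewrite ck. Qed.

Lemma tree_edge_weight_le e : e \in M -> weight c p e <= b.
Proof.
have hb k : (k < n)%N -> c k <= b.
  by move=> kn; case: (hc kn) => ->; [apply: ltW | apply: lexx].
by rewrite -(light_edges_eq_tree hM hb) inE => /andP[].
Qed.

Lemma revenue_le :
  revenue F p M <= a * #|M :\: red_edges n|%:R + (b - a) * #|M :\: X|%:R.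
Proof.
set MF := M :&: F.
have pw e : e \in MF -> p e = weight c p e.
  by move=> /setIP[_ /hF /andP[_ nr]]; rewrite /weight (negbTE nr).
have sMF : MF \subset M :\: red_edges n.
  by apply/subsetP => e /setIP[eM /hF /andP[_ nr]]; rewrite !inE eM nr.
have sa : \sum_(e in MF :&: X) p e <= #|MF :&: X|%:R * a.
  rewrite mulr_natl -sumr_const.
  by apply: ler_sum => e /setIP[/pw ->]; rewrite inE => /andP[].
have sb : \sum_(e in MF :\: X) p e <= #|MF :\: X|%:R * b.
  rewrite mulr_natl -sumr_const; apply: ler_sum => e /setDP[eMF _].
  by rewrite pw //; apply/tree_edge_weight_le/(subsetP (subsetIl M F)).
have k12 : #|MF :&: X|%:R + #|MF :\: X|%:R = #|MF|%:R :> R.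
  by rewrite -natrD cardsID.
have hm : #|MF|%:R <= #|M :\: red_edges n|%:R :> R by rewrite ler_nat subset_leq_card.
have hx : #|MF :\: X|%:R <= #|M :\: X|%:R :> R.
  by rewrite ler_nat; apply/subset_leq_card/setSD/subsetIl.
rewrite /revenue -/MF (big_setID X) /=; apply: le_trans (lerD sa sb) _.
have -> : #|MF :&: X|%:R * a + #|MF :\: X|%:R * b =
          a * #|MF|%:R + (b - a) * #|MF :\: X|%:R by rewrite -k12; ring.
have ba : 0 <= b - a by rewrite subr_ge0 ltW.
exact: lerD (ler_wpM2l ha hm) (ler_wpM2l ba hx).
Qed.

Lemma card_met_bad_blocks : (#|bad :&: met| <= #|M :&: red_edges n|)%N.
Proof.
pose inside (il : 'I_n.+1 * 'I_n.+1) (k : 'I_n.+1) :=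
  (il.1 <= k < il.1 + il.2)%N && (red_edge n k \in M).
pose edge_of (il : 'I_n.+1 * 'I_n.+1) :=
  if [pick k | inside il k] is Some k then red_edge n k else red_edge n 0.
have edge_ofP il : il \in bad :&: met ->
    exists2 k : 'I_n.+1, inside il k & edge_of il = red_edge n k.
  move=> /setIP[_]; rewrite inE => /existsP[k hk]; rewrite /edge_of.
  by case: pickP => [k' | /(_ k)]; [exists k' | rewrite /inside hk].
have inj : {in bad :&: met &, injective edge_of}.
  move=> il il' hil hil'.
  have [k /andP[kil _] ->] := edge_ofP il hil.
  have [k' /andP[kil' _] ->] := edge_ofP il' hil'.
  move=> [/(congr1 val)]; rewrite /= !inord_val => /ord_inj ekk _; subst k'.
  move: hil hil'; rewrite !inE => /andP[/andP[bl _] _] /andP[/andP[bl' _] _].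
  exact: a_block_unique bl bl' kil kil'.
rewrite -(card_in_imset inj); apply/subset_leq_card/subsetP => _ /imsetP[il hil ->].
have [k /andP[kil kM] ->] := edge_ofP il hil; rewrite inE kM red_edge_red //.
move: hil; rewrite !inE => /andP[/andP[/a_blockP[_ ln _ _ _] _] _].
by case/andP: kil => _ /leq_trans; apply.
Qed.

Lemma card_unmet_bad_blocks :
  (#|bad :\: met| + 2 * ncomp X <= 2 * #|run_starts c a n|)%N.
Proof.
set W := [set il.1 | il in bad :\: met].
have cW : #|W| = #|bad :\: met|.
  apply: card_in_imset => il il'; rewrite !inE.
  move=> /andP[_ /andP[bl _]] /andP[_ /andP[bl' _]] e1.
  have [l0 _ _ _ _] := a_blockP bl; have [l0' _ _ _ _] := a_blockP bl'.
  apply: (a_block_unique (k := il.1) bl bl');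
    by rewrite ?e1 leqnn /= -{1}[nat_of_ord _]addn0 ltn_add2l.
have sW : W \subset run_starts c a n.
  apply/subsetP => _ /imsetP[il hil ->]; move: hil; rewrite !inE => /andP[_ /andP[bl _]].
  by have [_ _ _ hs _] := a_blockP bl.
rewrite -cW (ncomp_run_starts light_connect_a_edge).
apply: card_fibers_ge2 sW _ => _ /imsetP[il hil ->].
move: hil; rewrite !inE => /andP[nmet /andP[bl l3]].
exact: unmet_bad_block_class (light_edges_sub _ _ _ _) tree_edge_ordered
  light_connect_a_edge bl l3 nmet.
Qed.

Lemma revenue_le_cost_sub :
  exists s1 s2 d : nat, [/\ bad_a_blocks n c a = (s1 + s2)%N, (s2 <= 2 * d)%N &
    revenue F p M <= path_cost n c - (s1%:R * a + d%:R * (b - a))].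
Proof.
set nb := #|[set k : 'I_n | c k != a]|.
exists #|bad :&: met|, #|bad :\: met|, (nb.+1 - ncomp X)%N.
have s1_le := card_met_bad_blocks; have s2_le := card_unmet_bad_blocks.
have starts_le := card_run_starts c a n; have comp_ge := ncomp_card X.
have [[_ cM _] _] := hM.
have cMred := cardsID (red_edges n) M.
have cMX := cardsID X M; rewrite (setIidPr (light_edges_sub _ _ _ _)) in cMX.
split; [by rewrite /bad_a_blocks cardsID | lia |].
have e1 : (#|M :\: red_edges n| + #|bad :&: met| <= n)%N by lia.
have e2 : (#|M :\: X| + (nb.+1 - ncomp X) <= nb)%N by lia.
move: e1 e2; rewrite -!(ler_nat R) !natrD => e1 e2.
have ba : 0 <= b - a by rewrite subr_ge0 ltW.
have := lerD (ler_wpM2l ha e1) (ler_wpM2l ba e2); have := revenue_le.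
rewrite (path_costE hc); lra.
Qed.

End Revenue.

Definition block_loss (R : realDomainType) (a b : R) (s : nat) : R :=
  Num.min (s%:R * a)
    ((s %/ 2)%:R * (b - a) + (s - 2 * (s %/ 2))%:R * Num.min a (b - a)).

(* If [q + r <= d] the second term of the minimum is at most [d (b - a)].
   Otherwise [d <= q]: when [3 a <= b] the first term is at most
   [s1 a + 2 d a <= s1 a + d (b - a)]; when [b < 3 a] the second one is, as
   [2 (q - d) + r <= s1] and [b - a < 2 a]. *)
Lemma block_loss_le (R : realFieldType) (a b : R) (s1 s2 d : nat) :
  0 <= a -> a < b -> (s2 <= 2 * d)%N ->
  block_loss a b (s1 + s2) <= s1%:R * a + d%:R * (b - a).
Proof.
move=> ha hab hs; rewrite /block_loss.
set sg := (s1 + s2)%N; set q := (sg %/ 2)%N; set r := (sg - 2 * q)%N.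
have hsg : sg = (2 * q + r)%N by rewrite /r /q; have := divn_eq sg 2; lia.
have hr : (r <= 1)%N.
  by rewrite /r /q; have := ltn_pmod sg (isT : (0 < 2)%N); have := divn_eq sg 2; lia.
have mb : Num.min a (b - a) <= b - a by rewrite ge_min lexx orbT.
have ma : Num.min a (b - a) <= a by rewrite ge_min lexx.
have [rR qR dR s1R] : [/\ 0 <= r%:R :> R, 0 <= q%:R :> R, 0 <= d%:R :> R & 0 <= s1%:R :> R].
  by split; apply: ler0n.
have [hqd | hqd] := leqP (q + r) d.
  rewrite ge_min; apply/orP; right.
  have hd : q%:R + r%:R <= d%:R :> R by rewrite -natrD ler_nat.
  have : r%:R * Num.min a (b - a) <= r%:R * (b - a) by apply: ler_wpM2l.
  nra.
have hdq : d%:R <= q%:R :> R by rewrite ler_nat; lia.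
have hs1 : 2 * q%:R + r%:R <= s1%:R + 2 * d%:R :> R.
  by rewrite -[2]/(2%:R) -!natrM -!natrD ler_nat; lia.
rewrite hsg natrD natrM ge_min.
have [h3 | h3] := lerP (3 * a) b; apply/orP; [left | right]; first by nra.
have : r%:R * Num.min a (b - a) <= r%:R * a by apply: ler_wpM2l.
nra.
Qed.

Theorem lemma1 (R : realFieldType) (n : nat) (c : nat -> R) (a b : R)
  (ha : 0 <= a) (hab : a < b)
  (hc : forall k, (k < n)%N -> c k = a \/ c k = b)
  (F : {set vpair n}) (hF : leader_edges F)
  (p : vpair n -> R) (hp : forall e, e \in F -> 0 <= p e)
  (M : {set vpair n}) (hM : is_MST c F p M) :
  let sigma := bad_a_blocks n c a in
  revenue F p M <=
    path_cost n c -
      Num.min (sigma%:R * a)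
        ((sigma %/ 2)%:R * (b - a)
         + (sigma - 2 * (sigma %/ 2))%:R * Num.min a (b - a)).
Proof.
have [s1 [s2 [d [hsig hs2 hrev]]]] := revenue_le_cost_sub ha hab hc hF hM.
cbv zeta; rewrite hsig; apply: le_trans hrev _; rewrite lerD2l lerN2.
exact: block_loss_le.
Qed.
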